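(* For every $p\in[0,1]$ and $k\ge1$, there is a deterministic algorithm for Locate on the uniform input distribution that runs in $k$ rounds, asks at most $k\lceil pn\rceil^{1/k}$ queries, and succeeds with probability at least $p$.
   Context: Locate problem in the rank query model: there is a vector $\vec{x}=(x_1,\ldots,x_n)$ whose ranks form a permutation of $\{1,\ldots,n\}$; an index $i$ is given and the goal is to output $\mathrm{rank}(x_i)$. Queries have the form ''How is $\mathrm{rank}(x_j)$ compared to $m$?'', with answer ''$<$'', ''$=$'' or ''$>$''. An algorithm runs in $k$ rounds if in each of $k$ rounds it submits a set of queries chosen depending only on answers of earlier rounds, then receives all answers. On the uniform input distribution the rank permutation is uniformly random, and the success probability is over this randomness. *)

From HB Require Import structures.
From mathcomp Require Import all_boot all_order all_algebra all_fingroup.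
From mathcomp Require Import all_classical all_reals all_analysis.
Set Implicit Arguments. Unset Strict Implicit. Unset Printing Implicit Defensive.
Import Order.TTheory GRing.Theory Num.Theory.

(* Answers to a rank query "How is rank(x_j) compared to m?" *)
Inductive ans := ALt | AEq | AGt.

Definition cmp_ans (a b : nat) : ans :=
  if (a < b)%N then ALt else if a == b then AEq else AGt.

(* The input is represented by its rank permutation s : 'S_n, with the
   convention rank(x_j) = (s j).+1 in {1,..,n}. *)
Definition rank_of n (s : 'S_n) (j : 'I_n) : nat := (s j).+1.

Definition query n := ('I_n * nat)%type.
Definition round_rec n := seq (query n * ans).
Definition history n := seq (round_rec n).

(* A deterministic adaptive algorithm: the set of queries of the next round
   is a function of the answers of all earlier rounds (the history), and the
   output is a function of the full history. *)
Record algo n := Algo {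
  next_queries : history n -> seq (query n);
  output : history n -> nat }.

Definition answer n (s : 'S_n) (q : query n) : query n * ans :=
  (q, cmp_ans (rank_of s q.1) q.2).

Fixpoint run n (A : algo n) (s : 'S_n) (r : nat) : history n :=
  match r with
  | 0 => [::]
  | r'.+1 => let h := run A s r' in
             rcons h (map (answer s) (next_queries A h))
  end.

Definition num_queries n (A : algo n) (s : 'S_n) (k : nat) : nat :=
  sumn (map size (run A s k)).

Definition succeeds n (A : algo n) (k : nat) (i : 'I_n) (s : 'S_n) : bool :=
  output A (run A s k) == rank_of s i.

Definition success_prob (R : realType) n (A : algo n) (k : nat) (i : 'I_n) : R :=
  (#|[set s : 'S_n | succeeds A k i s]|%:R / (#|[set: 'S_n]|)%:R)%R.

(* Round r of a (d+1)-ary search narrows an interval of length (d+1)^(k-r)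
   known to contain the rank of x_i to one of its d+1 blocks, using d queries
   at the block boundaries.  With d = floor(c^(1/k)) for c = ceil(pn), after k
   rounds the rank is determined whenever it is at most (d+1)^k > c, hence for
   the c smallest ranks; by symmetry each rank is equally likely, so the
   success probability is at least c/n >= p. *)
From HB Require Import structures.
From mathcomp Require Import all_boot all_order all_algebra all_fingroup.
From mathcomp Require Import all_classical all_reals all_analysis.
From mathcomp Require Import zify.
Import Order.TTheory GRing.Theory Num.Theory.
Set Implicit Arguments. Unset Strict Implicit. Unset Printing Implicit Defensive.

Lemma size_run n (A : algo n) (s : 'S_n) r : size (run A s r) = r.
Proof. by elim: r => //= r IHr; rewrite size_rcons IHr. Qed.

Section Search.

Variables (n : nat) (i : 'I_n).

Definition ans_ge (a : ans) : bool := if a is ALt then false else true.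

(* An answer other than "<" to the query (i, m) certifies s i >= m - 1. *)
Definition round_lb (r : round_rec n) : nat :=
  \max_(e <- r | (e.1.1 == i) && ans_ge e.2) e.1.2.-1.

Definition history_lb (h : history n) : nat := \max_(r <- h) round_lb r.

Lemma history_lb_rcons h r :
  history_lb (rcons h r) = maxn (history_lb h) (round_lb r).
Proof. by rewrite /history_lb -cats1 big_cat big_seq1. Qed.

Variables k d : nat.

Definition search_queries (h : history n) : seq (query n) :=
  let P := d.+1 ^ (k - (size h).+1) in
  [seq (i, (history_lb h + t * P).+1) | t <- iota 1 d].

Definition search_algo : algo n :=
  Algo search_queries (fun h => (history_lb h).+1).

Lemma num_queries_search_algo s r : num_queries search_algo s r = r * d.
Proof.
rewrite /num_queries; elim: r => //= r IHr.
by rewrite map_rcons sumn_rcons IHr !size_map size_iota mulSnr.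
Qed.

Lemma round_lb_search (s : 'S_n) L P :
  round_lb (map (answer s) [seq (i, (L + t * P).+1) | t <- iota 1 d])
  = \max_(t <- iota 1 d | L + t * P <= s i) (L + t * P).
Proof.
rewrite /round_lb !big_map; apply: eq_big => t //=.
by rewrite eqxx /cmp_ans /rank_of /= ltnS; case: ltnP => // _; case: eqP.
Qed.

Lemma refine_block (L v P : nat) : 0 < P -> L <= v < L + d.+1 * P ->
  maxn L (\max_(t <- iota 1 d | L + t * P <= v) (L + t * P)) <= v <
  maxn L (\max_(t <- iota 1 d | L + t * P <= v) (L + t * P)) + P.
Proof.
move=> P_gt0 /andP[Lv vL]; set L' := maxn L _; apply/andP; split.
  by rewrite geq_max Lv; apply/bigmax_leqP_seq.
set t := (v - L) %/ P.
have t_le : t * P <= v - L by apply: leq_divM.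
have t_gt : v - L < t.+1 * P by apply: ltn_ceil.
have [t0 | t_pos] := posnP t; first by rewrite t0 in t_gt; lia.
have : L + t * P <= L'.
  apply: leq_trans (leq_maxr _ _); apply: (leq_bigmax_seq t); last by lia.
  have : t < d.+1 by rewrite ltn_divLR //; lia.
  by rewrite mem_iota; lia.
lia.
Qed.

Lemma search_algo_invariant (s : 'S_n) r : r <= k -> s i < d.+1 ^ k ->
  history_lb (run search_algo s r) <= s i
    < history_lb (run search_algo s r) + d.+1 ^ (k - r).
Proof.
move=> + si_lt; elim: r => [_ | r IHr r_lt] /=.
  by rewrite /history_lb big_nil subn0.
rewrite history_lb_rcons /search_queries size_run round_lb_search.
apply: refine_block; first by rewrite expn_gt0.
by rewrite -expnS -subSn // subSS; apply: IHr; apply: ltnW.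
Qed.

Lemma search_algo_succeeds (s : 'S_n) :
  s i < d.+1 ^ k -> succeeds search_algo k i s.
Proof.
move=> si_lt; have := search_algo_invariant (leqnn k) si_lt.
rewrite subnn expn0 addn1 ltnS -eqn_leq => /eqP eq_si.
by rewrite /succeeds /rank_of /= eq_si.
Qed.

End Search.

Lemma card_perm_fiber n (i a b : 'I_n) :
  #|[set s : 'S_n | s i == a]| = #|[set s : 'S_n | s i == b]|.
Proof.
suff fiber_le x y : #|[set s : 'S_n | s i == x]| <= #|[set s : 'S_n | s i == y]|.
  by apply/eqP; rewrite eqn_leq !fiber_le.
rewrite -(card_imset _ (mulIg (tperm x y))); apply: subset_leq_card.
apply/fintype.subsetP => t /imsetP[s]; rewrite !inE => /eqP si_x ->.
by rewrite permM si_x tpermL.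
Qed.

Lemma card_perm_preim n (i : 'I_n) (P : pred 'I_n) :
  #|[set s : 'S_n | P (s i)]| = #|P| * #|[set s : 'S_n | s i == i]|.
Proof.
rewrite -sum1_card (eq_bigl (fun s : 'S_n => P (s i))) => [|s]; last by rewrite inE.
rewrite (partition_big (fun s : 'S_n => s i) P) //= -sum_nat_const.
apply: eq_bigr => a Pa; rewrite -(card_perm_fiber i a) -sum1_card.
by apply: eq_bigl => s; rewrite inE; case: eqP => [->|]; rewrite ?Pa ?andbF.
Qed.

Lemma card_ord_lt n c : c <= n -> #|[pred a : 'I_n | a < c]| = c.
Proof.
move=> c_le; rewrite -sum1_card -[in RHS](card_ord c) -sum1_card.
by rewrite (big_ord_widen n (fun _ => 1) c_le); apply: eq_bigl.
Qed.

Lemma card_perm_lt n (i : 'I_n) c : c <= n ->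
  #|[set s : 'S_n | s i < c]| * n = c * n`!.
Proof.
move=> c_le; have -> : n`! = #|[set s : 'S_n | predT (s i)]|.
  by rewrite -card_Sn -cardsT; apply: eq_card => s; rewrite !inE.
rewrite (card_perm_preim i [pred a : 'I_n | a < c]) card_perm_preim card_ord_lt //.
by rewrite (card_ord n : #|predT| = n) mulnAC -mulnA.
Qed.

Lemma exists_nat_root k N : 0 < k -> exists d, d ^ k <= N < d.+1 ^ k.
Proof.
move=> k_gt0; elim: N => [|N [d /andP[dk_le dk_gt]]].
  by exists 0; rewrite exp0n // exp1n.
have [dk_le' | dk_gt'] := leqP (d.+1 ^ k) N.+1; last first.
  by exists d; rewrite dk_gt' andbT; lia.
exists d.+1; rewrite dk_le' /=.
have : d.+1 ^ k < d.+2 ^ k by rewrite ltn_exp2r.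
lia.
Qed.

Local Open Scope ring_scope.

Lemma natr_le_powR_inv (R : realType) (k d N : nat) :
  (0 < k)%N -> (d ^ k <= N)%N -> d%:R <= powR (N%:R : R) k%:R^-1.
Proof.
move=> k_gt0 dk_le; have k_neq0 : (k%:R : R) != 0 by rewrite pnatr_eq0 -lt0n.
have -> : (d%:R : R) = powR (d%:R ^+ k) k%:R^-1.
  by rewrite -powR_mulrn // -powRrM mulfV // powRr1.
by apply: ge0_ler_powR; rewrite ?invr_ge0 ?nnegrE ?exprn_ge0 // -natrX ler_nat.
Qed.

Lemma ceil_mul_bounds (R : realType) (p : R) (n : nat) : 0 <= p <= 1 ->
  exists c : nat,
  [/\ (Num.ceil (p * n%:R))%:~R = c%:R :> R, (c <= n)%N & p * n%:R <= c%:R].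
Proof.
move=> /andP[p_ge0 p_le1].
have /gez0_abs ceil_eq : 0 <= Num.ceil (p * n%:R).
  by rewrite ceil_ge0 (lt_le_trans (ltrN10 R)) ?mulr_ge0.
exists `|Num.ceil (p * n%:R)|%N; rewrite -[X in X%:~R]ceil_eq; split=> //.
  rewrite -lez_nat ceil_eq ceil_le_int //.
  by rewrite -[leRHS]mul1r ler_wpM2r.
by rewrite natr_absz ger0_norm ?ceil_ge // -ceil_eq.
Qed.

Theorem proposition5 (R : realType) (n : nat) (i : 'I_n) (p : R) (k : nat) :
  0 <= p <= 1 -> (1 <= k)%N ->
  exists A : algo n,
    (forall s : 'S_n,
       (num_queries A s k)%:R
         <= k%:R * powR ((Num.ceil (p * n%:R))%:~R : R) (k%:R)^-1) /\
    p <= success_prob R A k i.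
Proof.
move=> p01 k_gt0; have n_gt0 : (0 < n)%N by case: n i => [[]|].
have [c [c_eq c_le pn_le]] := ceil_mul_bounds n p01.
have [d /andP[dk_le dk_gt]] := exists_nat_root c k_gt0.
exists (search_algo i k d); split=> [s|].
  rewrite num_queries_search_algo natrM ler_wpM2l // c_eq.
  exact: natr_le_powR_inv.
have lt_succeeds : [set s : 'S_n | (s i < c)%N]
    \subset [set s | succeeds (search_algo i k d) k i s].
  by apply/fintype.subsetP => s; rewrite !inE => si_lt; apply: search_algo_succeeds; lia.
rewrite /success_prob cardsT card_Sn ler_pdivlMr ?ltr0n ?fact_gt0 //.
rewrite -(ler_pM2r (_ : 0 < n%:R :> R)) ?ltr0n // mulrAC.
apply: le_trans (_ : c%:R * n`!%:R <= _); first by rewrite ler_wpM2r.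
rewrite -natrM -(card_perm_lt i) // natrM ler_wpM2r ?ler0n // ler_nat.
exact: subset_leq_card lt_succeeds.
Qed.
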